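(* Let $\mathbb{F}$ be an algebraically closed field of characteristic $p>2$ and $(V,[\cdot,\cdot]_V,\alpha_V,B_V)$ a restricted involutive quadratic Hom-Lie algebra with $p$-structure $[p]_V$. Let $L=\mathbb{F}e^*\oplus V\oplus\mathbb{F}e$ be the double extension of $V$ by $(\mathscr{D},x_0,1,\lambda_0)$ and $\widetilde L=\mathbb{F}\widetilde e^*\oplus V\oplus\mathbb{F}\widetilde e$ the double extension by $(\widetilde{\mathscr{D}},\widetilde x_0,1,\widetilde\lambda_0)$, where $\mathscr{D},\widetilde{\mathscr{D}}\in\mathrm{Der}_{\alpha_V}(V)$ are restricted derivations with the $p$-property (data $\xi,a_0$ resp. $\widetilde\xi,\widetilde a_0$) and $B_V$ is $\mathscr{D}$- and $\widetilde{\mathscr{D}}$-invariant. Let $L$ carry the $p$-structure $u^{[p]_L}=u^{[p]_V}+\mathscr{P}(u)e$ ($u\in V$), $(e^* )^{[p]_L}=a_0+le+\xi e^*$, $e^{[p]_L}=me+u_0$, and $\widetilde L$ the $p$-structure $u^{[p]_{\widetilde L}}=u^{[p]_V}+\widetilde{\mathscr{P}}(u)\widetilde e$, $(\widetilde e^* )^{[p]_{\widetilde L}}=\widetilde a_0+\widetilde l\widetilde e+\widetilde\xi\widetilde e^*$, $\widetilde e^{[p]_{\widetilde L}}=\widetilde m\widetilde e+\widetilde u_0$, where $l,m,\widetilde l,\widetilde m\in\mathbb{F}$, $u_0,\widetilde u_0\in\mathfrak z(V)$ with $\mathscr{D}(u_0)=\widetilde{\mathscr{D}}(\widetilde u_0)=0$,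 and $\mathscr{P},\widetilde{\mathscr{P}}:V\to\mathbb{F}$ satisfy $\mathscr{P}(cu)=c^p\mathscr{P}(u)$, $\mathscr{P}(u+v)=\mathscr{P}(u)+\mathscr{P}(v)+\sum_{i=1}^{p-1}\eta_i^V(u,v)$ (and likewise $\widetilde{\mathscr{P}}$ with $\widetilde\eta_i^V$ defined using $\widetilde{\mathscr{D}}$). Let $\pi:L\to\widetilde L$ be an adapted isomorphism of the form $\pi(u)=\pi_0(u)+B_V(t_\pi,u)\widetilde e$ ($u\in V$), $\pi(e)=\gamma\widetilde e$, $\pi(e^* )=\gamma^{-1}(\widetilde e^*-\pi_0(t_\pi)-\frac12B_V(t_\pi,t_\pi)\widetilde e)$, where $\pi_0$ is an automorphism of $V$, $\gamma\in\mathbb{F}\setminus\{0\}$ and $t_\pi\in V$. Then $\pi$ is restricted (i.e. $\pi(f^{[p]_L})=\pi(f)^{[p]_{\widetilde L}}$ for all $f\in L$) if and only if $\pi_0(u^{[p]_V})=(\pi_0(u))^{[p]_V}+B_V(t_\pi,u)^p\widetilde u_0$ for all $u\in V$ and $\widetilde{\mathscr{P}}\circ\pi_0=\gamma\mathscr{P}+B_V(t_\pi,(\cdot)^{[p]_V})-B_V(t_\pi,\cdot)^p\widetilde m$, $\widetilde\xi=\gamma^{p-1}\xi$, $\widetilde l=\gamma^p\big(B_V(t_\pi,a_0)+\gamma l-\frac{\xi}{2\gamma}B_V(t_\pi,t_\pi)\big)+\widetilde{\mathscr{P}}(\pi_0(t_\pi))+\frac{1}{2^p}B_V(t_\pi,t_\pi)^p\widetilde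 m-\sum_{i=1}^{p-1}\frac1i\Phi_{i,\mathrm{II}}$, $\widetilde a_0=\gamma^p(\pi_0(a_0)-\gamma^{-1}\xi\pi_0(t_\pi))+\frac{1}{2^p}B_V(t_\pi,t_\pi)^p\widetilde u_0+\pi_0(t_\pi)^{[p]_V}-\sum_{i=1}^{p-1}\frac1i\Phi_{i,\mathrm{I}}$, $\widetilde m=\gamma^{-p}(\gamma m+B_V(t_\pi,u_0))$, $\widetilde u_0=\gamma^{-p}\pi_0(u_0)$.
   Context: Hom-Lie algebra: $(\mathfrak g,[\cdot,\cdot],\alpha)$ with $[x,y]=-[y,x]$, $[\alpha(x),[y,z]]+[\alpha(y),[z,x]]+[\alpha(z),[x,y]]=0$, $\alpha([x,y])=[\alpha x,\alpha y]$; involutive: $\alpha^2=\mathrm{id}$; quadratic: symmetric nondegenerate bilinear $B$, $B([x,y],z)=B(x,[y,z])$, $B(\alpha x,y)=B(x,\alpha y)$. $p$-structure: map $x\mapsto x^{[p]}$ with $\mathrm{ad}(x^{[p]})\alpha^{p-1}=\mathrm{ad}(\alpha^{p-1}x)\cdots\mathrm{ad}(x)$, $(kx)^{[p]}=k^px^{[p]}$, $(x+y)^{[p]}=x^{[p]}+y^{[p]}+\sum_{i=1}^{p-1}s_i(x,y)$ with $\mathrm{ad}(\alpha^{p-2}(kx+y))\cdots\mathrm{ad}(kx+y)(x)=\sum_i is_i(x,y)k^{i-1}$. $\mathrm{Der}_{\alpha_V}(V)$: linear $\mathscr{D}$ with $\mathscr{D}\alpha_V=\alpha_V\mathscr{D}$,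 $\mathscr{D}[x,y]_V=[\mathscr{D}x,\alpha_Vy]_V+[\alpha_Vx,\mathscr{D}y]_V$; restricted: $\mathscr{D}(x^{[p]_V})=\mathrm{ad}_V(\alpha_V^{p-1}x)\cdots\mathrm{ad}_V(\alpha_Vx)(\mathscr{D}x)$; $p$-property with data $\xi,a_0$: $\mathscr{D}^p=\xi\mathscr{D}\alpha_V^{p-1}+\mathrm{ad}_V(a_0)\alpha_V^{p-1}$, $\mathscr{D}(a_0)=0$. $B_V$ $\mathscr{D}$-invariant: $B_V(\mathscr{D}x,y)+B_V(x,\mathscr{D}y)=0$. $\eta_i^V(u,v)$: defined by $B_V(\mathscr{D}(\alpha_V^{p-2}(ku+v)),\mathrm{ad}_V(\alpha_V^{p-3}(ku+v))\cdots\mathrm{ad}_V(ku+v)(u))=\sum_{i=1}^{p-1}i\eta_i^V(u,v)k^{i-1}$ for all $k$. Double extension by $(\mathscr{D},x_0,1,\lambda_0)$, where $x_0\in V$ satisfies $\mathscr{D}+\mathrm{ad}_V(x_0)=\mathscr{D}$, $\alpha_V(\mathscr{D}x_0)=-\mathscr{D}x_0$, $\alpha_V\mathscr{D}^2-\mathscr{D}^2\alpha_V=\mathrm{ad}_V(\mathscr{D}x_0)$: $L=\mathbb{F}e^*\oplus V\oplus\mathbb{F}e$ with skew bracket $[x,y]=[x,y]_V+B_V(\mathscr{D}x,y)e$, $[e^*,x]=-[x,e^*]=\mathscr{D}x$, $[e^*,e^*]=0$, $e$ central; $\alpha(x)=\alpha_V(x)+B_V(x_0,x)e$, $\alpha(e^*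 )=e^*+x_0+\lambda_0e$, $\alpha(e)=e$; $B|_V=B_V$, $B(V,e)=B(V,e^* )=0$, $B(e^*,e)=1$, $B(e^*,e^* )=B(e,e)=0$ (likewise $\widetilde L$ with twist $\widetilde\alpha$). Adapted isomorphism: linear bijection $\pi:L\to\widetilde L$ preserving brackets and forms, $\pi\alpha=\widetilde\alpha\pi$, $\pi(\mathbb{F}e\oplus V)=\mathbb{F}\widetilde e\oplus V$. Automorphism $\pi_0$ of $V$: linear bijection preserving $[\cdot,\cdot]_V$, $B_V$ and commuting with $\alpha_V$. $\Phi_{i,\mathrm I}\in V$, $\Phi_{i,\mathrm{II}}\in\mathbb{F}$: define $\Phi_i\in\widetilde L$ ($1\le i\le p-1$) by $\mathrm{ad}(\widetilde\alpha^{p-2}(k\widetilde e^*-\pi_0(t_\pi)))\circ\cdots\circ\mathrm{ad}(k\widetilde e^*-\pi_0(t_\pi))(\widetilde e^* )=\sum_{i=1}^{p-1}\Phi_ik^{i-1}$ for all $k\in\mathbb{F}$ (brackets in $\widetilde L$), and let $\Phi_{i,\mathrm I}$ and $\Phi_{i,\mathrm{II}}$ be the $V$-component and the $\widetilde e$-coefficient of $\Phi_i$ in $\widetilde L=\mathbb{F}\widetilde e^*\oplus V\oplus\mathbb{F}\widetilde e$. *)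

From mathcomp Require Import all_boot all_order all_algebra.
Set Implicit Arguments. Unset Strict Implicit. Unset Printing Implicit Defensive.
Import GRing.Theory.
Local Open Scope ring_scope.

Section HomLieDefs.
Variables (F : fieldType) (W : lmodType F).
Implicit Types (br : W -> W -> W) (al D : W -> W) (B : W -> W -> F).

Definition ad br (x : W) : W -> W := br x.

Fixpoint adprod br al (n : nat) (x : W) : W -> W :=
  match n with
  | 0 => id
  | n'.+1 => fun y => ad br (iter n' al x) (adprod br al n' x y)
  end.

Definition lin (f : W -> W) := forall (a : F) (x y : W), f (a *: x + y) = a *: f x + f y.

Definition HomLie br al :=
  [/\ forall a x y z, br (a *: x + y) z = a *: br x z + br y z,
      forall x y, br x y = - br y x,
      forall x y z, br (al x) (br y z) + br (al y) (br z x) + br (al z) (br x y) = 0,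
      lin al &
      forall x y, al (br x y) = br (al x) (al y)].

Definition Involutive al := forall x, al (al x) = x.

Definition Quadratic br al B :=
  [/\ forall a x y z, B (a *: x + y) z = a * B x z + B y z,
      forall x y, B x y = B y x,
      forall x, (forall y, B x y = 0) -> x = 0,
      forall x y z, B (br x y) z = B x (br y z) &
      forall x y, B (al x) y = B x (al y)].

Definition PStructure (p : nat) br al (pm : W -> W) :=
  [/\ forall x y, br (pm x) (iter p.-1 al y) = adprod br al p x y,
      forall (k : F) x, pm (k *: x) = k ^+ p *: pm x &
      forall x y, exists s : nat -> W,
        (forall k : F, adprod br al p.-1 (k *: x + y) x
                       = \sum_(1 <= i < p) (i%:R * k ^+ i.-1) *: s i) /\
        pm (x + y) = pm x + pm y + \sum_(1 <= i < p) s i].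

Definition DerAlpha br al D :=
  [/\ lin D, forall x, D (al x) = al (D x) &
      forall x y, D (br x y) = br (D x) (al y) + br (al x) (D y)].

Definition RestrictedDer (p : nat) br al (pm : W -> W) D :=
  forall x, D (pm x) = adprod br al p.-1 (al x) (D x).

Definition PProperty (p : nat) br al D (xi : F) (a0 : W) :=
  (forall x, iter p D x = xi *: D (iter p.-1 al x) + br a0 (iter p.-1 al x)) /\ D a0 = 0.

Definition DInvariant B D := forall x y, B (D x) y + B x (D y) = 0.

Definition central br (u : W) := forall x, br u x = 0.

(* "the eta_i^V(u,v) defined by ... " packaged with the additivity law of P:
   P(u+v) = P(u) + P(v) + sum_i eta_i(u,v) *)
Definition PAdd (p : nat) br al B D (P : W -> F) :=
  forall u v, exists eta : nat -> F,
    (forall k : F, B (D (iter p.-2 al (k *: u + v))) (adprod br al p.-2 (k *: u + v) u)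
                   = \sum_(1 <= i < p) i%:R * eta i * k ^+ i.-1) /\
    P (u + v) = P u + P v + \sum_(1 <= i < p) eta i.

Definition Automorphism br al B (f : W -> W) :=
  [/\ lin f, bijective f, forall x y, f (br x y) = br (f x) (f y),
      forall x y, B (f x) (f y) = B x y & forall x, f (al x) = al (f x)].

End HomLieDefs.

(* Double extension L = F e* (+) V (+) F e, an element a e* + x + b e is ((a, x), b) *)
Section DoubleExt.
Variables (F : fieldType) (V : lmodType F).

Definition DE : lmodType F := (F^o * V * F^o)%type.
Definition mkDE (a : F) (x : V) (b : F) : DE := ((a : F^o, x), b : F^o).
Definition es (f : DE) : F := f.1.1.
Definition vp (f : DE) : V := f.1.2.
Definition ec (f : DE) : F := f.2.

Variables (brV : V -> V -> V) (alV : V -> V) (BV : V -> V -> F) (D : V -> V)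
          (x0 : V) (lam0 : F).

(* [x,y] = [x,y]_V + B_V(Dx,y) e, [e*,x] = -[x,e*] = Dx, [e*,e*] = 0, e central *)
Definition DE_br (f g : DE) : DE :=
  mkDE 0 (brV (vp f) (vp g) + es f *: D (vp g) - es g *: D (vp f))
         (BV (D (vp f)) (vp g)).

(* alpha(x) = alpha_V x + B_V(x0,x) e ; alpha of e-star = e-star + x0 + lam0 e ; alpha(e) = e *)
Definition DE_alpha (f : DE) : DE :=
  mkDE (es f) (alV (vp f) + es f *: x0) (lam0 * es f + BV x0 (vp f) + ec f).

Definition DE_form (f g : DE) : F :=
  BV (vp f) (vp g) + es f * ec g + ec f * es g.

Definition DE_data_ok :=
  [/\ forall x, D x + brV x0 x = D x,
      alV (D x0) = - D x0 &
      forall x, alV (D (D x)) - D (D (alV x)) = brV (D x0) x].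

End DoubleExt.

Definition AdaptedIso (F : fieldType) (V : lmodType F)
  (br1 br2 : DE V -> DE V -> DE V) (al1 al2 : DE V -> DE V)
  (B1 B2 : DE V -> DE V -> F) (pi : DE V -> DE V) :=
  [/\ lin pi /\ bijective pi,
      forall f g, pi (br1 f g) = br2 (pi f) (pi g),
      forall f g, B2 (pi f) (pi g) = B1 f g,
      forall f, pi (al1 f) = al2 (pi f) &
      (forall g, es g = 0 <-> exists f, es f = 0 /\ pi f = g)].

From mathcomp Require Import all_boot all_order all_algebra.
From mathcomp Require Import ring.
Set Implicit Arguments. Unset Strict Implicit. Unset Printing Implicit Defensive.
Import GRing.Theory.
Local Open Scope ring_scope.

(* The defect f |-> pi(f)^[p] - pi(f^[p]) is additive and p-semilinear: the
   terms s_i(x, y) of the sum rule are transported by pi, and they are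
   determined by their defining polynomial identity in k because F is infinite
   and 1, ..., p-1 are invertible.  So pi is restricted iff the defect vanishes
   on V, on e and on e*.  Since e is central, ^[p] is additive along e, which
   settles V and e directly.  For e*, the image gam^-1 (e~* - pi0 t - B(t,t)/2 e~)
   is raised to the p-th power with the sum rule, whose correction terms are
   the Phi_i / i. *)

Lemma exists_nonroot_of_unity (F : closedFieldType) (n : nat) :
  exists2 c : F, c != 0 & forall m, (0 < m < n)%N -> c ^+ m != 1.
Proof.
pose q : {poly F} := 'X * \prod_(m < n) ('X ^+ m.+1 - 1).
have q_neq0 : q != 0.
  rewrite mulf_neq0 ?polyX_eq0 //; apply/prodf_neq0 => i _.
  by rewrite -polyC1 monic_neq0 // monicXnsubC.
have [c] := closed_nonrootP q q_neq0.
rewrite /root /q hornerM hornerX horner_prod mulf_eq0 negb_or => /andP[c_neq0 hprod].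
exists c => // [[|m]] // /andP[_ mn].
have := prodf_neq0 _ _ hprod (Ordinal (ltnW mn)) isT.
by rewrite !hornerE subr_eq0.
Qed.

Lemma sum_powers_coef_eq0 (F : fieldType) (W : lmodType F) (n : nat) (c : F)
    (d : nat -> W) :
  c != 0 -> (forall m, (0 < m < n)%N -> c ^+ m != 1) ->
  (forall k : F, \sum_(j < n) k ^+ j *: d j = 0) -> forall j, (j < n)%N -> d j = 0.
Proof.
move=> c_neq0; elim: n d => [|n IH] d hc hsum j //.
have hlt i : (i < n)%N -> d i = 0.
  move=> i_lt_n.
  (* comparing the sums at [c * k] and at [k] kills the top coefficient *)
  have : (c ^+ i - c ^+ n) *: d i = 0.
    apply: (IH (fun i => (c ^+ i - c ^+ n) *: d i)) => // [m /andP[m0 mn] | k].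
      by apply: hc; rewrite m0 ltnW.
    transitivity (\sum_(j < n.+1) (c * k) ^+ j *: d j
                  - c ^+ n *: \sum_(j < n.+1) k ^+ j *: d j); last first.
      by rewrite !hsum scaler0 subr0.
    rewrite scaler_sumr !big_ord_recr /= exprMn scalerA opprD addrACA -sumrB.
    rewrite mulrC subrr addr0; apply: eq_bigr => l _.
    by rewrite exprMn !scalerA -scalerBl mulrBr mulrC (mulrC (c ^+ n)).
  have -> : c ^+ n = c ^+ i * c ^+ (n - i) by rewrite -exprD subnKC // ltnW.
  rewrite -{1}[c ^+ i]mulr1 -mulrBr -scalerA; move/eqP; rewrite !scaler_eq0.
  rewrite expf_eq0 (negbTE c_neq0) andbF subr_eq0 eq_sym.
  by rewrite (negbTE (hc _ _)) ?subn_gt0 ?i_lt_n ?ltnS ?leq_subr //= => /eqP.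
rewrite ltnS leq_eqVlt => /orP[/eqP -> | ]; last exact: hlt.
have := hsum 1; rewrite big_ord_recr /= big1 => [|i _]; last by rewrite hlt ?scaler0.
by rewrite expr1n scale1r add0r.
Qed.

Lemma closed_sum_powers_coef_eq0 (F : closedFieldType) (W : lmodType F) (n : nat)
    (v : nat -> W) :
  (forall k : F, \sum_(1 <= i < n) k ^+ i.-1 *: v i = 0) ->
  forall i, (0 < i < n)%N -> v i = 0.
Proof.
move=> hsum [|i] // /andP[_ i_lt_n].
have [c c_neq0 hc] := exists_nonroot_of_unity F n.-1.
apply: (sum_powers_coef_eq0 (d := fun j => v j.+1) c_neq0 hc); last first.
  by rewrite -ltnS prednK // (leq_ltn_trans _ i_lt_n).
by move=> k; rewrite -[RHS](hsum k) big_add1 big_mkord.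
Qed.

Lemma pchar_natr_neq0 (F : fieldType) (p i : nat) :
  p \in [pchar F] -> (0 < i < p)%N -> (i%:R : F) != 0.
Proof.
move=> hp /andP[i_gt0 i_lt_p]; rewrite -(dvdn_pcharf hp).
by apply: contraTN i_lt_p => /(dvdn_leq i_gt0); rewrite leqNgt.
Qed.

Lemma pchar_predn_gt0 (F : fieldType) (p : nat) : p \in [pchar F] -> (0 < p.-1)%N.
Proof. by move/pcharf_prime/prime_gt1; rewrite -subn1 subn_gt0. Qed.

Section LinearMaps.
Variables (F : fieldType) (W : lmodType F) (f : W -> W).
Hypothesis f_lin : lin f.

Lemma lin0 : f 0 = 0.
Proof.
by have /eqP := f_lin 1 0 0; rewrite !scale1r !addr0 addrC -subr_eq subrr eq_sym => /eqP.
Qed.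

Lemma linD : {morph f : x y / x + y}.
Proof. by move=> x y; have := f_lin 1 x y; rewrite !scale1r. Qed.

Lemma linZ a : {morph f : x / a *: x}.
Proof. by move=> x; rewrite -[a *: x]addr0 f_lin lin0 addr0. Qed.

End LinearMaps.

Lemma adprod_morph (F : fieldType) (W1 W2 : lmodType F) (br1 : W1 -> W1 -> W1)
    (al1 : W1 -> W1) (br2 : W2 -> W2 -> W2) (al2 : W2 -> W2) (f : W1 -> W2) :
  {morph f : x y / br1 x y >-> br2 x y} -> {morph f : x / al1 x >-> al2 x} ->
  forall n x y, f (adprod br1 al1 n x y) = adprod br2 al2 n (f x) (f y).
Proof.
move=> f_br f_al; elim=> [|n IH] x y //=.
rewrite /ad f_br IH; congr br2; elim: n {IH} => //= n <-; exact: f_al.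
Qed.

Section PStructureTheory.
Variables (F : closedFieldType) (p : nat) (W : lmodType F).
Hypothesis hp : p \in [pchar F].

Section OnePStructure.
Variables (br : W -> W -> W) (al pm : W -> W).
Hypothesis hpm : PStructure p br al pm.

Lemma pstructure_addE x y (Phi : nat -> W) :
  (forall k : F,
     adprod br al p.-1 (k *: x + y) x = \sum_(1 <= i < p) k ^+ i.-1 *: Phi i) ->
  pm (x + y) = pm x + pm y + \sum_(1 <= i < p) (i%:R)^-1 *: Phi i.
Proof.
move=> hPhi; case: hpm => _ _ /(_ x y) [s [hs ->]]; congr (_ + _).
apply: eq_big_nat => i ip; have i_neq0 := pchar_natr_neq0 hp ip.
have : i%:R *: s i - Phi i = 0.
  apply: (closed_sum_powers_coef_eq0 (v := fun i => i%:R *: s i - Phi i)) ip => k.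
  rewrite -[RHS](subrr (adprod br al p.-1 (k *: x + y) x)) {1}hs hPhi -sumrB.
  by apply: eq_bigr => j _; rewrite scalerBr !scalerA mulrC.
by move/eqP; rewrite subr_eq0 => /eqP <-; rewrite scalerA mulVf ?scale1r.
Qed.

Lemma pstructure_add_central z :
  (forall w, br w 0 = 0) -> (forall w, br w z = 0) ->
  forall x, pm (z + x) = pm z + pm x.
Proof.
move=> br0 brz x; rewrite (@pstructure_addE _ _ (fun=> 0)) => [|k].
  by rewrite big1 ?addr0 // => i _; rewrite scaler0.
have adprod_z n w : adprod br al n.+1 w z = 0.
  by elim: n => [|n IH] /=; rewrite /ad ?brz //; rewrite /= /ad in IH; rewrite IH.
rewrite big1 => [|i _]; last by rewrite scaler0.
by rewrite -(prednK (pchar_predn_gt0 hp)) adprod_z.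
Qed.

End OnePStructure.

Definition pdefect (f pm1 pm2 : W -> W) x := pm2 (f x) - f (pm1 x).

Variables (br1 br2 : W -> W -> W) (al1 al2 pm1 pm2 f : W -> W).
Hypotheses (hpm1 : PStructure p br1 al1 pm1) (hpm2 : PStructure p br2 al2 pm2).
Hypotheses (f_lin : lin f) (f_br : {morph f : x y / br1 x y >-> br2 x y})
  (f_al : {morph f : x / al1 x >-> al2 x}).

Lemma pdefectD x y :
  pdefect f pm1 pm2 (x + y) = pdefect f pm1 pm2 x + pdefect f pm1 pm2 y.
Proof.
rewrite /pdefect; case: (hpm1) => _ _ /(_ x y) [s [hs ->]].
have [fD fZ] := (linD f_lin, linZ f_lin).
have f_sum := big_morph f fD (lin0 f_lin).
have hPhi k : adprod br2 al2 p.-1 (k *: f x + f y) (f x)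
              = \sum_(1 <= i < p) k ^+ i.-1 *: f (i%:R *: s i).
  rewrite -fZ -fD -(adprod_morph f_br f_al) hs f_sum.
  by apply: eq_bigr => i _; rewrite !fZ scalerA mulrC.
rewrite [f (x + y)]fD (pstructure_addE hpm2 hPhi).
have -> : \sum_(1 <= i < p) (i%:R)^-1 *: f (i%:R *: s i) = f (\sum_(1 <= i < p) s i).
  rewrite f_sum; apply: eq_big_nat => i ip.
  by rewrite fZ scalerA mulVf ?scale1r // (pchar_natr_neq0 hp).
by rewrite !fD opprD addrACA subrr addr0 opprD addrACA.
Qed.

Lemma pdefectZ a x : pdefect f pm1 pm2 (a *: x) = a ^+ p *: pdefect f pm1 pm2 x.
Proof.
case: hpm1 hpm2 => _ hZ1 _ [_ hZ2 _].
by rewrite /pdefect hZ1 !(linZ f_lin) hZ2 scalerBr.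
Qed.

End PStructureTheory.

Section DoubleExtensionAlgebra.
Variables (F : fieldType) (V : lmodType F).
Implicit Types (a b c : F) (x : V) (f g : DE V).

Lemma DE_eta f : f = mkDE (es f) (vp f) (ec f).
Proof. by case: f => [[]]. Qed.

Lemma DE_ext f g : f = g <-> [/\ es f = es g, vp f = vp g & ec f = ec g].
Proof. by split=> [-> // | [ef vf cf]]; rewrite [f]DE_eta [g]DE_eta ef vf cf. Qed.

Lemma mkDE_subr_eq0 a x b a' x' b' :
  mkDE a x b - mkDE a' x' b' = 0 <-> [/\ a = a', x = x' & b = b'].
Proof. by split=> [/subr0_eq/DE_ext | [-> -> ->]]; last exact: subrr. Qed.

Lemma esE a x b : es (mkDE a x b) = a. Proof. by []. Qed.
Lemma vpE a x b : vp (mkDE a x b) = x. Proof. by []. Qed.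
Lemma ecE a x b : ec (mkDE a x b) = b. Proof. by []. Qed.
Lemma es0 : es (0 : DE V) = 0. Proof. by []. Qed.
Lemma vp0 : vp (0 : DE V) = 0. Proof. by []. Qed.
Lemma ec0 : ec (0 : DE V) = 0. Proof. by []. Qed.
Lemma esD : {morph @es F V : f g / f + g}. Proof. by []. Qed.
Lemma vpD : {morph @vp F V : f g / f + g}. Proof. by []. Qed.
Lemma ecD : {morph @ec F V : f g / f + g}. Proof. by []. Qed.
Lemma esN : {morph @es F V : f / - f}. Proof. by []. Qed.
Lemma vpN : {morph @vp F V : f / - f}. Proof. by []. Qed.
Lemma ecN : {morph @ec F V : f / - f}. Proof. by []. Qed.
Lemma esZ c f : es (c *: f) = c * es f. Proof. by []. Qed.
Lemma vpZ c f : vp (c *: f) = c *: vp f. Proof. by []. Qed.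
Lemma ecZ c f : ec (c *: f) = c * ec f. Proof. by []. Qed.

Definition DE_compE :=
  (esD, vpD, ecD, esN, vpN, ecN, esZ, vpZ, ecZ, es0, vp0, ec0, esE, vpE, ecE).

Lemma DE_dec a x b : mkDE a x b = a *: mkDE 1 0 0 + mkDE 0 x 0 + b *: mkDE 0 0 1.
Proof. by apply/DE_ext; rewrite !DE_compE !mulr1 !mulr0 !scaler0 !addr0 !add0r. Qed.

Lemma DE_sum (I : Type) (r : seq I) (P : pred I) (G : I -> DE V) :
  \sum_(i <- r | P i) G i =
  mkDE (\sum_(i <- r | P i) es (G i)) (\sum_(i <- r | P i) vp (G i))
       (\sum_(i <- r | P i) ec (G i)).
Proof.
by rewrite [LHS]DE_eta (big_morph _ esD es0) (big_morph _ vpD vp0) (big_morph _ ecD ec0).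
Qed.

Variables (brV : V -> V -> V) (alV : V -> V) (BV : V -> V -> F) (D : V -> V).
Variables (x0 : V) (lam0 : F).
Local Notation brL := (DE_br brV BV D).
Local Notation alL := (DE_alpha alV BV x0 lam0).

(* The bracket and the e*- and V-components of the twist ignore e-components. *)
Lemma adprod_es_vp n f g y : es f = es g -> vp f = vp g ->
  adprod brL alL n f y = adprod brL alL n g y.
Proof.
move=> esfg vpfg.
have iter_al k :
    es (iter k alL f) = es (iter k alL g) /\ vp (iter k alL f) = vp (iter k alL g).
  elim: k => [|k [IHe IHv]] //=.
  by rewrite /DE_alpha /es /vp /= -/(es _) -/(vp _) IHe IHv.
elim: n => [|n IH] //=; have [ite itv] := iter_al n.
by rewrite IH /ad /DE_br ite itv.
Qed.

Lemma DE_br_central c :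
  (forall x, brV x 0 = 0) -> (forall x, BV x 0 = 0) -> D 0 = 0 ->
  forall f, brL f (mkDE 0 0 c) = 0.
Proof. by move=> br0 B0 D0 f; rewrite /DE_br br0 D0 B0 scaler0 scale0r subr0 addr0. Qed.

End DoubleExtensionAlgebra.

Lemma DE_restrictedP (F : closedFieldType) (p : nat) (V : lmodType F)
    (br1 br2 : DE V -> DE V -> DE V) (al1 al2 pm1 pm2 pi : DE V -> DE V) :
  p \in [pchar F] -> PStructure p br1 al1 pm1 -> PStructure p br2 al2 pm2 -> lin pi ->
  {morph pi : f g / br1 f g >-> br2 f g} -> {morph pi : f / al1 f >-> al2 f} ->
  (forall f, pi (pm1 f) = pm2 (pi f)) <->
  [/\ forall u, pdefect pi pm1 pm2 (mkDE 0 u 0) = 0,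
      pdefect pi pm1 pm2 (mkDE 0 0 1) = 0 & pdefect pi pm1 pm2 (mkDE 1 0 0) = 0].
Proof.
move=> hp hpm1 hpm2 pi_lin pi_br pi_al.
split=> [hpi | [hV he hes] f]; first by split=> *; rewrite /pdefect hpi subrr.
apply/eqP; rewrite eq_sym -subr_eq0 -/(pdefect pi pm1 pm2 f) [f]DE_eta DE_dec.
have [dD dZ] := (pdefectD hp hpm1 hpm2 pi_lin pi_br pi_al, pdefectZ hpm1 hpm2 pi_lin).
by rewrite !dD !dZ hV he hes !scaler0 !addr0.
Qed.

Section RestrictedAdaptedIsomorphism.
Variables (F : closedFieldType) (p : nat) (V : lmodType F).
Hypotheses (hp : p \in [pchar F]) (hp2 : (2 < p)%N).
Variables (brV : V -> V -> V) (alV : V -> V) (BV : V -> V -> F) (pmV : V -> V).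
Hypotheses (brV0 : forall x, brV x 0 = 0) (BV0 : forall x, BV x 0 = 0).
Variables (D Dt : V -> V) (x0 x0t : V) (lam0 lam0t : F).
Hypothesis Dt0 : Dt 0 = 0.
Local Notation brL := (DE_br brV BV D).
Local Notation alL := (DE_alpha alV BV x0 lam0).
Local Notation brLt := (DE_br brV BV Dt).
Local Notation alLt := (DE_alpha alV BV x0t lam0t).

Variables (pL pLt : DE V -> DE V) (P Pt : V -> F) (xi xit l lt m mt : F).
Variables (a0 a0t u0 u0t : V).
Hypotheses (hpL : PStructure p brL alL pL)
  (hpLV : forall u, pL (mkDE 0 u 0) = mkDE 0 (pmV u) (P u))
  (hpLes : pL (mkDE 1 0 0) = mkDE xi a0 l) (hpLe : pL (mkDE 0 0 1) = mkDE 0 u0 m).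
Hypotheses (hpLt : PStructure p brLt alLt pLt)
  (hpLtV : forall u, pLt (mkDE 0 u 0) = mkDE 0 (pmV u) (Pt u))
  (hpLtes : pLt (mkDE 1 0 0) = mkDE xit a0t lt) (hpLte : pLt (mkDE 0 0 1) = mkDE 0 u0t mt).

Variables (pi : DE V -> DE V) (pi0 : V -> V) (gam : F) (t : V).
Hypotheses (pi_lin : lin pi) (pi_br : {morph pi : f g / brL f g >-> brLt f g})
  (pi_al : {morph pi : f / alL f >-> alLt f}) (gam_neq0 : gam != 0)
  (hpiV : forall u, pi (mkDE 0 u 0) = mkDE 0 (pi0 u) (BV t u))
  (hpie : pi (mkDE 0 0 1) = mkDE 0 0 gam)
  (hpies : pi (mkDE 1 0 0) = gam^-1 *: mkDE 1 (- pi0 t) (- (2^-1 * BV t t))).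

Variable Phi : nat -> DE V.
Hypothesis hPhi : forall k : F,
  adprod brLt alLt p.-1 (mkDE k (- pi0 t) 0) (mkDE 1 0 0)
  = \sum_(1 <= i < p) k ^+ i.-1 *: Phi i.

Lemma odd_pchar : odd p.
Proof. by case: (even_prime (pcharf_prime hp)) hp2 => [-> | ]. Qed.

Lemma pi_mkDE a x b :
  pi (mkDE a x b) = mkDE (gam^-1 * a) (pi0 x - (gam^-1 * a) *: pi0 t)
                         (BV t x + b * gam - gam^-1 * a * (2^-1 * BV t t)).
Proof.
rewrite DE_dec !(linD pi_lin) !(linZ pi_lin) hpiV hpie hpies; apply/DE_ext.
rewrite !DE_compE; split; [ring | | ring].
by rewrite scaler0 addr0 !scalerN scalerA [a * _]mulrC addrC.
Qed.

Lemma pLt_e c : pLt (mkDE 0 0 c) = c ^+ p *: mkDE 0 u0t mt.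
Proof.
case: hpLt => _ hZ _; rewrite -hpLte -hZ; congr pLt.
by apply/DE_ext; rewrite !DE_compE mulr0 scaler0 mulr1.
Qed.

Lemma pLt_V x c : pLt (mkDE 0 x c) = mkDE 0 (c ^+ p *: u0t + pmV x) (c ^+ p * mt + Pt x).
Proof.
have -> : mkDE 0 x c = mkDE 0 0 c + mkDE 0 x 0.
  by apply/DE_ext; rewrite !DE_compE !add0r addr0.
rewrite (pstructure_add_central hp hpLt _ (DE_br_central _ brV0 BV0 Dt0)); last first.
  exact: (DE_br_central 0 brV0 BV0 Dt0).
by rewrite pLt_e hpLtV; apply/DE_ext; rewrite !DE_compE mulr0 add0r.
Qed.

Lemma pLtN f : pLt (- f) = - pLt f.
Proof.
by case: hpLt => _ hZ _; rewrite -scaleN1r hZ -signr_odd odd_pchar expr1 scaleN1r.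
Qed.

Lemma es_Phi i : (0 < i < p)%N -> es (Phi i) = 0.
Proof.
apply: (closed_sum_powers_coef_eq0 (W := F^o) (v := fun i => es (Phi i))) => k.
transitivity (es (\sum_(1 <= i < p) k ^+ i.-1 *: Phi i)).
  by rewrite (big_morph _ (@esD _ _) (es0 _)).
by rewrite -hPhi -(prednK (pchar_predn_gt0 hp)).
Qed.

Lemma sum_Phi : \sum_(1 <= i < p) (i%:R)^-1 *: Phi i =
  mkDE 0 (\sum_(1 <= i < p) (i%:R)^-1 *: vp (Phi i))
         (\sum_(1 <= i < p) (i%:R)^-1 * ec (Phi i)).
Proof.
rewrite DE_sum; congr mkDE; apply: big1_seq => i; rewrite mem_index_iota => ip.
by rewrite esZ es_Phi ?mulr0.
Qed.

Lemma pLt_estar_add y : es y = 0 -> vp y = - pi0 t ->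
  pLt (mkDE 1 0 0 + y) = mkDE xit a0t lt + pLt y + \sum_(1 <= i < p) (i%:R)^-1 *: Phi i.
Proof.
move=> esy vpy; rewrite (pstructure_addE hp hpLt (Phi := Phi)) ?hpLtes // => k.
rewrite -hPhi; apply: adprod_es_vp;
  by rewrite !DE_compE ?esy ?vpy ?mulr1 ?addr0 ?scaler0 ?add0r.
Qed.

Lemma pLt_pi_estar : pLt (pi (mkDE 1 0 0)) = gam ^- p *:
  (mkDE xit a0t lt
   - mkDE 0 ((2 ^+ p)^-1 * BV t t ^+ p *: u0t + pmV (pi0 t))
            ((2 ^+ p)^-1 * BV t t ^+ p * mt + Pt (pi0 t))
   + \sum_(1 <= i < p) (i%:R)^-1 *: Phi i).
Proof.
case: hpLt => _ hZ _; rewrite hpies hZ exprVn; congr (_ *: _).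
have -> : mkDE 1 (- pi0 t) (- (2^-1 * BV t t))
          = mkDE 1 0 0 + - mkDE 0 (pi0 t) (2^-1 * BV t t).
  by apply/DE_ext; rewrite !DE_compE !add0r subr0.
by rewrite pLt_estar_add ?pLtN ?pLt_V ?exprMn ?exprVn // !DE_compE oppr0.
Qed.

Lemma two_neq0 : (2 : F) != 0.
Proof. by rewrite (pchar_natr_neq0 hp) ?hp2. Qed.

Lemma pdefect_V u : pdefect pi pL pLt (mkDE 0 u 0) =
  mkDE 0 (pmV (pi0 u) + BV t u ^+ p *: u0t) (Pt (pi0 u))
  - mkDE 0 (pi0 (pmV u)) (gam * P u + BV t (pmV u) - BV t u ^+ p * mt).
Proof.
rewrite /pdefect hpiV pLt_V hpLV pi_mkDE; apply/DE_ext; rewrite !DE_compE.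
split; [ring | | ring].
by rewrite mulr0 scale0r subr0 [_ + pmV _]addrC.
Qed.

Lemma pdefect_e : pdefect pi pL pLt (mkDE 0 0 1) =
  gam ^+ p *: (mkDE 0 u0t mt
               - mkDE 0 (gam ^- p *: pi0 u0) (gam ^- p * (gam * m + BV t u0))).
Proof.
have gam_exp_neq0 : gam ^+ p != 0 by rewrite expf_neq0.
rewrite /pdefect hpie pLt_e hpLe pi_mkDE; apply/DE_ext; rewrite !DE_compE.
split; [ring | | by field; rewrite gam_exp_neq0 two_neq0 gam_neq0].
by rewrite mulr0 scale0r subr0 scalerBr scalerA mulfV // scale1r.
Qed.

Lemma pdefect_estar : pdefect pi pL pLt (mkDE 1 0 0) =
  gam ^- p *:
  (mkDE xit a0t lt
   - mkDE (gam ^+ p.-1 * xi)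
       (gam ^+ p *: (pi0 a0 - (gam^-1 * xi) *: pi0 t)
        + ((2 ^+ p)^-1 * BV t t ^+ p) *: u0t + pmV (pi0 t)
        - \sum_(1 <= i < p) (i%:R)^-1 *: vp (Phi i))
       (gam ^+ p * (BV t a0 + gam * l - xi / (2 * gam) * BV t t)
        + Pt (pi0 t) + (2 ^+ p)^-1 * BV t t ^+ p * mt
        - \sum_(1 <= i < p) (i%:R)^-1 * ec (Phi i))).
Proof.
have gam_exp : gam ^+ p = gam ^+ p.-1 * gam.
  by rewrite -exprSr prednK // prime_gt0 ?(pcharf_prime hp).
have gam_exp_neq0 : gam ^+ p != 0 by rewrite expf_neq0.
have gam_pred_exp_neq0 : gam ^+ p.-1 != 0 by rewrite expf_neq0.
have two_exp_neq0 : (2 : F) ^+ p != 0 by rewrite expf_neq0 ?two_neq0.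
rewrite /pdefect pLt_pi_estar hpLes pi_mkDE sum_Phi; apply/DE_ext; rewrite !DE_compE.
split; [rewrite gam_exp; field | | field]; rewrite ?two_exp_neq0 ?gam_neq0 ?two_neq0
  ?gam_exp_neq0 ?gam_pred_exp_neq0 //.
set W := pi0 a0 - _ *: pi0 t; set S := \sum_(1 <= i < p) _.
rewrite -[gam ^+ p *: W + _ + _]addrA; set Q := _ *: u0t + pmV _.
have -> : a0t - (gam ^+ p *: W + Q - S) = a0t - Q + S - gam ^+ p *: W.
  rewrite !opprD opprK !addrA [RHS]addrAC; congr (_ + _).
  by rewrite [RHS]addrAC; congr (_ + _); exact: addrAC.
by rewrite scalerBr scalerA mulVf // scale1r.
Qed.

Lemma restricted_adapted_isoP :
  (forall f, pi (pL f) = pLt (pi f)) <->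
  [/\ (forall u : V, pi0 (pmV u) = pmV (pi0 u) + BV t u ^+ p *: u0t),
      (forall u : V, Pt (pi0 u) = gam * P u + BV t (pmV u) - BV t u ^+ p * mt),
      xit = gam ^+ p.-1 * xi,
      lt = gam ^+ p * (BV t a0 + gam * l - xi / (2 * gam) * BV t t)
           + Pt (pi0 t) + (2 ^+ p)^-1 * BV t t ^+ p * mt
           - \sum_(1 <= i < p) (i%:R)^-1 * ec (Phi i) &
      [/\ a0t = gam ^+ p *: (pi0 a0 - (gam^-1 * xi) *: pi0 t)
                + ((2 ^+ p)^-1 * BV t t ^+ p) *: u0t + pmV (pi0 t)
                - \sum_(1 <= i < p) (i%:R)^-1 *: vp (Phi i),
          mt = gam ^- p * (gam * m + BV t u0) &
          u0t = gam ^- p *: pi0 u0]].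
Proof.
have gam_exp_neq0 : gam ^+ p != 0 by rewrite expf_neq0.
apply: (iff_trans (DE_restrictedP hp hpL hpLt pi_lin pi_br pi_al)).
rewrite pdefect_e pdefect_estar.
split=> [[hV /eqP he /eqP hes] | [hpmV hPt hxi hl [ha0 hm hu0]]].
  move: he hes; rewrite !scaler_eq0 invr_eq0 (negbTE gam_exp_neq0) /=.
  move=> /eqP/mkDE_subr_eq0[_ hu0 hm] /eqP/mkDE_subr_eq0[hxi ha0 hl].
  by split=> // u; have := hV u; rewrite pdefect_V => /mkDE_subr_eq0[_ /esym ? ?].
split=> [u | |]; last by rewrite hxi ha0 hl subrr scaler0.
  by rewrite pdefect_V hpmV hPt subrr.
by rewrite hu0 hm subrr scaler0.
Qed.

End RestrictedAdaptedIsomorphism.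

Theorem theorem4p13
  (F : closedFieldType) (p : nat) (hp : p \in [pchar F]) (hp2 : (2 < p)%N)
  (V : lmodType F) (brV : V -> V -> V) (alV : V -> V) (BV : V -> V -> F)
  (pmV : V -> V)
  (hV : HomLie brV alV) (hinv : Involutive alV) (hQ : Quadratic brV alV BV)
  (hpV : PStructure p brV alV pmV)
  (D Dt : V -> V) (xi xit : F) (a0 a0t : V)
  (hD : DerAlpha brV alV D) (hDr : RestrictedDer p brV alV pmV D)
  (hDp : PProperty p brV alV D xi a0) (hBD : DInvariant BV D)
  (hDt : DerAlpha brV alV Dt) (hDtr : RestrictedDer p brV alV pmV Dt)
  (hDtp : PProperty p brV alV Dt xit a0t) (hBDt : DInvariant BV Dt)
  (x0 x0t : V) (lam0 lam0t : F)
  (hx0 : DE_data_ok brV alV D x0) (hx0t : DE_data_ok brV alV Dt x0t)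
  (P Pt : V -> F) (l m lt mt : F) (u0 u0t : V)
  (hu0 : central brV u0) (hDu0 : D u0 = 0)
  (hu0t : central brV u0t) (hDtu0t : Dt u0t = 0)
  (hP1 : forall (c : F) (u : V), P (c *: u) = c ^+ p * P u)
  (hP2 : PAdd p brV alV BV D P)
  (hPt1 : forall (c : F) (u : V), Pt (c *: u) = c ^+ p * Pt u)
  (hPt2 : PAdd p brV alV BV Dt Pt)
  (pL pLt : DE V -> DE V)
  (hpL : PStructure p (DE_br brV BV D) (DE_alpha alV BV x0 lam0) pL)
  (hpLV : forall u : V, pL (mkDE 0 u 0) = mkDE 0 (pmV u) (P u))
  (hpLes : pL (mkDE 1 0 0) = mkDE xi a0 l)
  (hpLe : pL (mkDE 0 0 1) = mkDE 0 u0 m)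
  (hpLt : PStructure p (DE_br brV BV Dt) (DE_alpha alV BV x0t lam0t) pLt)
  (hpLtV : forall u : V, pLt (mkDE 0 u 0) = mkDE 0 (pmV u) (Pt u))
  (hpLtes : pLt (mkDE 1 0 0) = mkDE xit a0t lt)
  (hpLte : pLt (mkDE 0 0 1) = mkDE 0 u0t mt)
  (pi0 : V -> V) (gam : F) (t : V)
  (hpi0 : Automorphism brV alV BV pi0) (hgam : gam != 0)
  (pi : DE V -> DE V)
  (hpi : AdaptedIso (DE_br brV BV D) (DE_br brV BV Dt)
                    (DE_alpha alV BV x0 lam0) (DE_alpha alV BV x0t lam0t)
                    (DE_form BV) (DE_form BV) pi)
  (hpiV : forall u : V, pi (mkDE 0 u 0) = mkDE 0 (pi0 u) (BV t u))
  (hpie : pi (mkDE 0 0 1) = mkDE 0 0 gam)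
  (hpies : pi (mkDE 1 0 0) = gam^-1 *: mkDE 1 (- pi0 t) (- (2^-1 * BV t t)))
  (Phi : nat -> DE V)
  (hPhi : forall k : F,
     adprod (DE_br brV BV Dt) (DE_alpha alV BV x0t lam0t) p.-1
            (mkDE k (- pi0 t) 0) (mkDE 1 0 0)
     = \sum_(1 <= i < p) k ^+ i.-1 *: Phi i) :
  (forall f : DE V, pi (pL f) = pLt (pi f)) <->
  [/\ (forall u : V, pi0 (pmV u) = pmV (pi0 u) + BV t u ^+ p *: u0t),
      (forall u : V, Pt (pi0 u) = gam * P u + BV t (pmV u) - BV t u ^+ p * mt),
      xit = gam ^+ p.-1 * xi,
      lt = gam ^+ p * (BV t a0 + gam * l - xi / (2 * gam) * BV t t)
           + Pt (pi0 t) + (2 ^+ p)^-1 * BV t t ^+ p * mt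
           - \sum_(1 <= i < p) (i%:R)^-1 * ec (Phi i) &
      [/\ a0t = gam ^+ p *: (pi0 a0 - (gam^-1 * xi) *: pi0 t)
                + ((2 ^+ p)^-1 * BV t t ^+ p) *: u0t + pmV (pi0 t)
                - \sum_(1 <= i < p) (i%:R)^-1 *: vp (Phi i),
          mt = gam ^- p * (gam * m + BV t u0) &
          u0t = gam ^- p *: pi0 u0]].
Proof.
have [hbr hskew _ _ _] := hV; have [hB hBsym _ _ _] := hQ.
have brV0 x : brV x 0 = 0.
  have := hbr 1 0 0 x; rewrite !scale1r addr0 -{1}[brV 0 x]addr0 => /addrI br0x.
  by rewrite hskew -br0x oppr0.
have BV0 x : BV x 0 = 0.
  have := hB 1 0 0 x; rewrite scale1r addr0 mul1r -{1}[BV 0 x]addr0 => /addrI B0x.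
  by rewrite hBsym -B0x.
have Dt0 : Dt 0 = 0 by case: hDt => /lin0.
have [[pi_lin _] pi_br _ pi_al _] := hpi.
exact: (restricted_adapted_isoP hp hp2 brV0 BV0 Dt0 hpL hpLV hpLes hpLe hpLt hpLtV
          hpLtes hpLte pi_lin pi_br pi_al hgam hpiV hpie hpies hPhi).
Qed.
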